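(* Let $n\ge3$ and $H=\sum_{1\le i\ne j\le n}[X_{ij}(R),X_{ji}(R)]\subseteq\mathfrak{stl}_n(R)$. Every $x\in H$ can be written as $$x=\sum_i t(a_i,b_i)+\sum_{2\le j\le n}T_{1j}(c_j,1)$$ for finitely many $a_i,b_i\in R$ and some $c_j\in R$.
   Context: $K$ is a unital commutative ring, $R$ a unital associative $K$-algebra, free as a $K$-module with a basis containing $1$. Leibniz algebra: $K$-bilinear bracket with $[x,[y,z]]=[[x,y],z]-[[x,z],y]$. For $n\ge3$, $\mathfrak{stl}_n(R)$ is the Leibniz algebra over $K$ generated by $X_{ij}(a)$, $a\in R$, $1\le i\ne j\le n$, subject to: $X_{ij}$ is $K$-linear in $a$; $[X_{ij}(a),X_{jk}(b)]=X_{ik}(ab)$ and $[X_{ij}(a),X_{ki}(b)]=-X_{kj}(ba)$ for distinct $i,j,k$; $[X_{ij}(a),X_{kl}(b)]=0$ for $j\ne k$, $i\ne l$. Notation: $T_{ij}(a,b)=[X_{ij}(a),X_{ji}(b)]$, and $t(a,b)=T_{1j}(a,b)-T_{1j}(ba,1)$ for any $2\le j\le n$ (this is independent of $j$). *)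

From HB Require Import structures.
From mathcomp Require Import all_boot all_order all_algebra.
Set Implicit Arguments. Unset Strict Implicit. Unset Printing Implicit Defensive.
Import GRing.Theory.
Local Open Scope ring_scope.

Definition free_with_basis_containing_1 (K : comPzRingType) (R : algType K) : Prop :=
  exists B : pred R,
    [/\ B 1,
        (forall x : R, exists (s : seq R) (c : R -> K),
            all B s /\ x = \sum_(b <- s) c b *: b)
      & (forall (s : seq R) (c : R -> K),
            all B s -> uniq s -> \sum_(b <- s) c b *: b = 0 ->
            forall b, b \in s -> c b = 0)].

Definition is_leibniz (K : comPzRingType) (L : lmodType K) (br : L -> L -> L) : Prop :=
  [/\ (forall (c : K) (x y z : L), br (c *: x + y) z = c *: br x z + br y z),
      (forall (c : K) (x y z : L), br x (c *: y + z) = c *: br x y + br x z)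
    & (forall x y z : L, br x (br y z) = br (br x y) z - br (br x z) y)].

Definition idx (n i : nat) : bool := (1 <= i <= n)%N.

Definition stl_relations (K : comPzRingType) (R : algType K) (L : lmodType K)
    (br : L -> L -> L) (n : nat) (X : nat -> nat -> R -> L) : Prop :=
  [/\ (forall i j, idx n i -> idx n j -> i != j ->
         forall (c : K) (a b : R), X i j (c *: a + b) = c *: X i j a + X i j b),
      (forall i j k, idx n i -> idx n j -> idx n k ->
         i != j -> j != k -> i != k ->
         forall a b : R, br (X i j a) (X j k b) = X i k (a * b)),
      (forall i j k, idx n i -> idx n j -> idx n k ->
         i != j -> j != k -> i != k ->
         forall a b : R, br (X i j a) (X k i b) = - X k j (b * a))
    & (forall i j k l, idx n i -> idx n j -> idx n k -> idx n l ->
         i != j -> k != l -> j != k -> i != l ->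
         forall a b : R, br (X i j a) (X k l b) = 0)].

Definition Tij (K : comPzRingType) (R : algType K) (L : lmodType K)
    (br : L -> L -> L) (X : nat -> nat -> R -> L) (i j : nat) (a b : R) : L :=
  br (X i j a) (X j i b).

(* t(a,b) = T_12(a,b) - T_12(ba,1)  (taking j = 2) *)
Definition tt (K : comPzRingType) (R : algType K) (L : lmodType K)
    (br : L -> L -> L) (X : nat -> nat -> R -> L) (a b : R) : L :=
  Tij br X 1 2 a b - Tij br X 1 2 (b * a) 1.

(* x lies in H = sum over 1 <= i != j <= n of the K-spans of [X_ij(R), X_ji(R)].
   Since X_ij is K-linear, scalars are absorbed, so the span consists of finite sums. *)
Definition in_H (K : comPzRingType) (R : algType K) (L : lmodType K)
    (br : L -> L -> L) (n : nat) (X : nat -> nat -> R -> L) (x : L) : Prop :=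
  exists s : seq (nat * nat * R * R),
    all (fun q => [&& idx n q.1.1.1, idx n q.1.1.2 & q.1.1.1 != q.1.1.2]) s /\
    x = \sum_(q <- s) Tij br X q.1.1.1 q.1.1.2 q.1.2 q.2.

From HB Require Import structures.
From mathcomp Require Import all_boot all_order all_algebra.
From mathcomp Require Import zify.
Set Implicit Arguments. Unset Strict Implicit. Unset Printing Implicit Defensive.
Import GRing.Theory.
Local Open Scope ring_scope.

(* The Leibniz identity rewrites [[X_ij(a), X_jk(b)], X_ki(c)] in two ways, giving
   T_ij(ab, c) = T_ik(a, bc) - T_jk(ca, b) for distinct i, j, k.  With k = 1 or
   j = 1 this expresses every T_ij through the T_1j, and T_1j(a, b) differs from
   t(a, b) by T_1j(ba, 1).  Hence H lies in the span of the t(a, b) and T_1j(c, 1),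
   a span which is closed under sums and negation because T_ij is additive in its
   first argument. *)

Section LeibnizBracket.
Variables (K : comPzRingType) (L : lmodType K) (br : L -> L -> L).
Hypothesis hL : is_leibniz br.

Lemma leibniz_brDl x y z : br (x + y) z = br x z + br y z.
Proof. by case: hL => brl _ _; have := brl 1 x y z; rewrite !scale1r. Qed.

Lemma leibniz_br0l z : br 0 z = 0.
Proof. by apply: (addrI (br 0 z)); rewrite -leibniz_brDl !addr0. Qed.

Lemma leibniz_brNl x z : br (- x) z = - br x z.
Proof. by apply/eqP; rewrite -subr_eq0 opprK -leibniz_brDl addNr leibniz_br0l. Qed.

Lemma leibniz_brA x y z : br (br x y) z = br x (br y z) + br (br x z) y.
Proof. by case: hL => _ _ jac; rewrite jac subrK. Qed.

End LeibnizBracket.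

Section SteinbergLeibniz.
Variables (K : comPzRingType) (R : algType K) (L : lmodType K) (br : L -> L -> L).
Variables (n : nat) (X : nat -> nat -> R -> L).
Hypotheses (hL : is_leibniz br) (hX : stl_relations br n X).

Local Notation T := (Tij br X).

Section Additivity.
Variables (i j : nat).
Hypotheses (hi : idx n i) (hj : idx n j) (hij : i != j).

Lemma stl_XD a a' : X i j (a + a') = X i j a + X i j a'.
Proof. by case: hX => Xlin _ _ _; have := Xlin i j hi hj hij 1 a a'; rewrite !scale1r. Qed.

Lemma Tij_addl a a' b : T i j (a + a') b = T i j a b + T i j a' b.
Proof. by rewrite /Tij stl_XD leibniz_brDl. Qed.

Lemma Tij_0l b : T i j 0 b = 0.
Proof. by apply: (addrI (T i j 0 b)); rewrite -Tij_addl !addr0. Qed.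

Lemma Tij_oppl a b : T i j (- a) b = - T i j a b.
Proof. by apply/eqP; rewrite -subr_eq0 opprK -Tij_addl addNr Tij_0l. Qed.

End Additivity.

Lemma Tij_mul i j k : idx n i -> idx n j -> idx n k ->
    i != j -> j != k -> i != k -> forall a b c,
  T i j (a * b) c = T i k a (b * c) - T j k (c * a) b.
Proof.
move=> hi hj hk hij hjk hik a b c; case: hX => _ r2 r3 _.
have [hkj hki hji] : [/\ k != j, k != i & j != i] by split; rewrite eq_sym.
rewrite /Tij -(r2 i k j) // (leibniz_brA hL) (r2 k j i) // (r3 i k j) //.
by rewrite (leibniz_brNl hL).
Qed.

Lemma idx_range j : (2 <= j < n.+1)%N = idx n j && (j != 1%N).
Proof. by rewrite /idx; apply/idP/idP; lia. Qed.

Hypothesis hn : (3 <= n)%N.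

Let idx1 : idx n 1. Proof. by rewrite /idx; lia. Qed.
Let idx2 : idx n 2. Proof. by rewrite /idx; lia. Qed.

Lemma tt_Tij j : (2 <= j < n.+1)%N -> forall a b,
  tt br X a b = T 1 j a b - T 1 j (b * a) 1.
Proof.
rewrite idx_range => /andP[hj hj1] a b.
have [->|hj2] := eqVneq j 2%N; first by [].
have h1j : 1%N != j by rewrite eq_sym.
have e1 := Tij_mul idx1 hj idx2 h1j hj2 isT a 1 b.
have e2 := Tij_mul idx1 hj idx2 h1j hj2 isT (b * a) 1 1.
rewrite !mulr1 !mul1r in e1 e2.
by rewrite /tt e1 e2 opprB addrA subrK.
Qed.

Definition tspan (x : L) : Prop :=
  exists (s : seq (R * R)) (c : nat -> R),
    x = \sum_(p <- s) tt br X p.1 p.2 + \sum_(2 <= j < n.+1) T 1 j (c j) 1.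

Lemma sum_T1j_addl (c c' : nat -> R) :
  \sum_(2 <= j < n.+1) T 1 j (c j + c' j) 1 =
    \sum_(2 <= j < n.+1) T 1 j (c j) 1 + \sum_(2 <= j < n.+1) T 1 j (c' j) 1.
Proof.
rewrite -big_split; apply: eq_big_nat => j; rewrite idx_range => /andP[hj hj1].
by rewrite Tij_addl // eq_sym.
Qed.

Lemma sum_T1j_0l : \sum_(2 <= j < n.+1) T 1 j 0 1 = 0.
Proof.
rewrite big_nat big1 // => j; rewrite idx_range => /andP[hj hj1].
by rewrite Tij_0l // eq_sym.
Qed.

Lemma tspan0 : tspan 0.
Proof. by exists [::], (fun _ => 0); rewrite big_nil add0r sum_T1j_0l. Qed.

Lemma tspanD x y : tspan x -> tspan y -> tspan (x + y).
Proof.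
move=> [s [c ->]] [s' [c' ->]]; exists (s ++ s'), (fun j => c j + c' j).
by rewrite big_cat sum_T1j_addl addrACA.
Qed.

Lemma tspanN x : tspan x -> tspan (- x).
Proof.
move=> [s [c ->]]; exists [seq (- p.1, p.2) | p <- s], (fun j => - c j).
rewrite big_map opprD -!sumrN; congr (_ + _).
  apply: eq_bigr => p _.
  by rewrite /tt mulrN !(Tij_oppl idx1 idx2 isT) opprD.
apply: eq_big_nat => j; rewrite idx_range => /andP[hj hj1].
by rewrite Tij_oppl // eq_sym.
Qed.

Lemma tspanB x y : tspan x -> tspan y -> tspan (x - y).
Proof. by move=> hx hy; apply/tspanD/tspanN. Qed.

Lemma tspan_tt a b : tspan (tt br X a b).
Proof. by exists [:: (a, b)], (fun _ => 0); rewrite big_seq1 sum_T1j_0l addr0. Qed.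

Lemma tspan_T1j1 j c : (2 <= j < n.+1)%N -> tspan (T 1 j c 1).
Proof.
move=> hj; exists [::], (fun k => if k == j then c else 0).
rewrite big_nil add0r (bigD1_seq j) ?iota_uniq ?mem_index_iota //= eqxx.
rewrite big1_seq ?addr0 // => k /andP[/negbTE -> hk].
move: hk; rewrite mem_index_iota idx_range => /andP[hk hk1].
by rewrite Tij_0l // eq_sym.
Qed.

Lemma tspan_T1j j a b : idx n j -> 1%N != j -> tspan (T 1 j a b).
Proof.
move=> hj h1j; have hjr : (2 <= j < n.+1)%N by rewrite idx_range hj eq_sym.
rewrite -[T 1 j a b](subrK (T 1 j (b * a) 1)) -tt_Tij //.
by apply: tspanD; [exact: tspan_tt | exact: tspan_T1j1].
Qed.

Lemma tspan_Tjk j k a b : idx n j -> idx n k -> 1%N != j -> 1%N != k -> j != k ->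
  tspan (T j k a b).
Proof.
move=> hj hk h1j h1k hjk.
have := Tij_mul idx1 hj hk h1j hjk h1k 1 b a; rewrite mul1r mulr1 => e.
have -> : T j k a b = T 1 k 1 (b * a) - T 1 j b a by rewrite e opprB addrC subrK.
by apply: tspanB; apply: tspan_T1j; rewrite // (eq_sym k).
Qed.

Lemma tspan_Tj1 j a b : idx n j -> 1%N != j -> tspan (T j 1 a b).
Proof.
move=> hj h1j.
(* n >= 3 supplies a third index. *)
pose k := if j == 2%N then 3%N else 2%N.
have hk : idx n k by rewrite /k; case: ifP; rewrite /idx; lia.
have h1k : 1%N != k by rewrite /k; case: ifP.
have hjk : j != k by rewrite /k; case: (eqVneq j 2%N) => [->|].
have hj1 : j != 1%N by rewrite eq_sym.
have := Tij_mul hj idx1 hk hj1 h1k hjk 1 a b.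
rewrite !mul1r mulr1 => ->.
by apply: tspanB; [apply: tspan_Tjk | apply: tspan_T1j].
Qed.

Lemma tspan_Tij i j a b : idx n i -> idx n j -> i != j -> tspan (T i j a b).
Proof.
move=> hi hj hij.
have [? | hi1] := eqVneq i 1%N; first by subst i; exact: tspan_T1j.
have [? | hj1] := eqVneq j 1%N; first by subst j; apply: tspan_Tj1; rewrite // eq_sym.
by apply: tspan_Tjk; rewrite // eq_sym.
Qed.

Lemma in_H_tspan x : in_H br n X x -> tspan x.
Proof.
case=> s [hs ->]; elim: s hs => [|[[[i j] a] b] s IH]; first by rewrite big_nil => _; exact: tspan0.
rewrite big_cons => /andP[/and3P[hi hj hij] hs].
by apply: tspanD; [exact: tspan_Tij | exact: IH].
Qed.

End SteinbergLeibniz.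

Theorem lemma2p7 (K : comPzRingType) (R : algType K)
    (hR : free_with_basis_containing_1 R)
    (L : lmodType K) (br : L -> L -> L) (hL : is_leibniz br)
    (n : nat) (hn : (3 <= n)%N) (X : nat -> nat -> R -> L)
    (hX : stl_relations br n X) (x : L) (hx : in_H br n X x) :
  exists (s : seq (R * R)) (c : nat -> R),
    x = \sum_(p <- s) tt br X p.1 p.2 + \sum_(2 <= j < n.+1) Tij br X 1 j (c j) 1.
Proof. exact: (in_H_tspan hL hX hn hx). Qed.
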